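(* Let $G\subsetneq\mathbb{R}^n$ be a domain and let $p\ge 1$. Then for all points $z_1,z_2\in G$, \[ s_G(z_1,z_2)\le b_{G,p}(z_1,z_2)\le 2^{1-1/p}\,s_G(z_1,z_2). \]
   Context: For a domain $G\subsetneq\mathbb{R}^n$, $p\ge1$ and $z_1,z_2\in G$, the Barrlund metric is \[ b_{G,p}(z_1,z_2)=\sup_{z\in\partial G}\frac{|z_1-z_2|}{\sqrt[p]{|z_1-z|^p+|z-z_2|^p}}, \] and the triangular ratio metric is $s_G(z_1,z_2)=b_{G,1}(z_1,z_2)=\sup_{z\in\partial G}\frac{|z_1-z_2|}{|z_1-z|+|z-z_2|}$. *)

From HB Require Import structures.
From mathcomp Require Import all_boot all_order all_algebra.
From mathcomp Require Import all_classical all_reals all_analysis.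
Set Implicit Arguments. Unset Strict Implicit. Unset Printing Implicit Defensive.
Import Order.TTheory GRing.Theory Num.Theory.
Import numFieldNormedType.Exports.
Local Open Scope classical_set_scope.
Local Open Scope ring_scope.

(* The topology on 'rV[R]_n is the
   product topology, which coincides with the Euclidean one.  Distances are
   measured with the Euclidean norm (defined explicitly, since the library
   norm on matrices is the max norm). *)
Definition enorm (R : realType) (n : nat) (x : 'rV[R]_n) : R :=
  Num.sqrt (\sum_(i < n) (x ord0 i) ^+ 2).

Definition domain (R : realType) (n : nat) (G : set 'rV[R]_n) : Prop :=
  [/\ G !=set0, open G & connected G].

Definition boundary (R : realType) (n : nat) (G : set 'rV[R]_n) : set 'rV[R]_n :=
  closure G `\` interior G.

Definition barrlund (R : realType) (n : nat) (G : set 'rV[R]_n) (p : R)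
  (z1 z2 : 'rV[R]_n) : R :=
  sup [set enorm (z1 - z2) /
           powR (powR (enorm (z1 - z)) p + powR (enorm (z - z2)) p) p^-1
      | z in boundary G].

Definition triangular_ratio (R : realType) (n : nat) (G : set 'rV[R]_n)
  (z1 z2 : 'rV[R]_n) : R :=
  sup [set enorm (z1 - z2) / (enorm (z1 - z) + enorm (z - z2))
      | z in boundary G].

From mathcomp Require Import all_boot all_order all_algebra.
From mathcomp Require Import all_classical all_reals all_analysis.
From mathcomp Require Import lra.
Import Order.TTheory GRing.Theory Num.Theory.
Import numFieldNormedType.Exports.
Local Open Scope classical_set_scope.
Local Open Scope ring_scope.

(* For a, b >= 0 and p >= 1 the l^p norm M = (a^p + b^p)^(1/p) of (a, b)
   satisfies M <= a + b <= 2^(1 - 1/p) M: the first inequality is the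
   superadditivity of t |-> t^p, the second is Hoelder's inequality for
   (a, b) and (1, 1) with the conjugate exponent of p.  Dividing |z1 - z2| by
   these quantities with a = |z1 - z|, b = |z - z2| compares the two quotients
   pointwise on the boundary, and the comparison passes to the suprema.  Being
   pointwise, the argument works for any set G. *)

Section lpnorm2.
Context {R : realType}.
Implicit Types a b p : R.

Definition lpnorm2 p a b : R := powR (powR a p + powR b p) p^-1.

Lemma powR_superadditive a b p : 0 <= a -> 0 <= b -> 1 <= p ->
  powR a p + powR b p <= powR (a + b) p.
Proof.
move=> a0 b0 p1.
have powR_split x : 0 <= x -> powR x p = x * powR x (p - 1).
  move=> x0; rewrite -{2}(powRr1 x0) -powRD; first by rewrite subrKC.
  by apply/implyP; rewrite subrKC => /eqP p0; move: p1; rewrite p0 ler10.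
have le_x x : 0 <= x -> x <= a + b -> powR x p <= x * powR (a + b) (p - 1).
  move=> x0 xs; rewrite powR_split // ler_wpM2l // ge0_ler_powR ?nnegrE //; lra.
apply: (le_trans (lerD (le_x a a0 _) (le_x b b0 _))); [lra | lra |].
by rewrite -mulrDl -powR_split ?addr_ge0.
Qed.

Lemma lpnorm2_ge0 a b p : 0 <= lpnorm2 p a b.
Proof. exact: powR_ge0. Qed.

Lemma lpnorm2_le_add a b p : 0 <= a -> 0 <= b -> 1 <= p ->
  lpnorm2 p a b <= a + b.
Proof.
move=> a0 b0 p1.
have p0 : p != 0 by apply/eqP => p0; move: p1; rewrite p0 ler10.
rewrite -[leRHS](powRr1 (addr_ge0 a0 b0)) -(mulfV p0) powRrM.
rewrite ge0_ler_powR ?invr_ge0 ?nnegrE ?addr_ge0 ?powR_ge0 //; first lra.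
exact: powR_superadditive.
Qed.

Lemma add_le_lpnorm2 a b p : 0 <= a -> 0 <= b -> 1 <= p ->
  a + b <= powR 2 (1 - p^-1) * lpnorm2 p a b.
Proof.
move=> a0 b0 p1; have [->|pn1] := eqVneq p 1.
  by rewrite /lpnorm2 invr1 subrr powRr0 mul1r !powRr1 ?addr_ge0.
have p_gt1 : 1 < p by rewrite lt_neqAle eq_sym pn1.
have q_gt0 : 0 < 1 - p^-1 by rewrite subr_gt0 invf_lt1 //; lra.
have := @hoelder2 R a b 1 1 p (1 - p^-1)^-1 a0 b0 ler01 ler01.
rewrite invr_gt0 q_gt0 invrK subrKC !powR1 !mulr1 => /(_ _ isT erefl).
by rewrite mulrC; apply; lra.
Qed.

End lpnorm2.

Section quotients.
Context {R : realType}.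
Implicit Types c d x y : R.

(* Since [d / 0 = 0], the condition [y <= c * x] is what rules out [x = 0 < y]. *)
Lemma ler_div_den c d x y : 0 <= d -> 0 <= x -> x <= y -> y <= c * x ->
  d / y <= d / x.
Proof.
move=> d0 x0 xy yx; have [x_eq0|x_neq0] := eqVneq x 0.
  have y_eq0 : y = 0 by rewrite x_eq0 mulr0 in yx; lra.
  by rewrite x_eq0 y_eq0.
by rewrite ler_wpM2l // lef_pV2 ?posrE //; lra.
Qed.

Lemma ler_div_den_scale c d x y : 0 <= d -> 0 <= x -> x <= y -> y <= c * x ->
  d / x <= c * (d / y).
Proof.
move=> d0 x0 xy yx; have [x_eq0|x_neq0] := eqVneq x 0.
  have y_eq0 : y = 0 by rewrite x_eq0 mulr0 in yx; lra.
  by rewrite x_eq0 y_eq0 invr0 !mulr0.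
have x_gt0 : 0 < x by lra.
have y_gt0 : 0 < y by lra.
have c_gt0 : 0 < c by rewrite -(pmulr_lgt0 _ x_gt0); lra.
by rewrite mulrCA ler_wpM2l // -div1r ler_pdivrMr // mulrAC ler_pdivlMr // mul1r.
Qed.

Lemma sup_image_le_scale {T : Type} {A : set T} {f g : T -> R} {c : R} :
  0 <= c -> has_ubound (g @` A) -> (forall z, A z -> f z <= c * g z) ->
  sup (f @` A) <= c * sup (g @` A).
Proof.
move=> c0 ubg fg; have [[w Aw]|A0] := pselect (A !=set0); last first.
  have -> : A = set0 by apply/seteqP; split => // x Ax; apply: A0; exists x.
  by rewrite !image_set0 sup0 mulr0.
apply: ge_sup; first by exists (f w), w.
move=> _ [z Az <-]; apply: (le_trans (fg z Az)); rewrite ler_wpM2l //.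
by apply: ub_le_sup => //; exists z.
Qed.

End quotients.

Lemma enorm_ge0 (R : realType) n (x : 'rV[R]_n) : 0 <= enorm x.
Proof. exact: sqrtr_ge0. Qed.

(* The constant 2 is harmless: this only serves to bound the quotients above. *)
Lemma enormD_le_double (R : realType) n (x y : 'rV[R]_n) :
  enorm (x + y) <= 2 * (enorm x + enorm y).
Proof.
rewrite /enorm.
set X := \sum_(i < n) (x ord0 i) ^+ 2; set Y := \sum_(i < n) (y ord0 i) ^+ 2.
have X0 : 0 <= X by apply: sumr_ge0 => i _; exact: sqr_ge0.
have Y0 : 0 <= Y by apply: sumr_ge0 => i _; exact: sqr_ge0.
have sum_le : \sum_(i < n) ((x + y) ord0 i) ^+ 2 <= 2 * X + 2 * Y.
  rewrite /X /Y !mulr_sumr -big_split /=; apply: ler_sum => i _.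
  rewrite mxE; have := sqr_ge0 (x ord0 i - y ord0 i); nra.
have sx := sqr_sqrtr X0; have sy := sqr_sqrtr Y0.
have hx := sqrtr_ge0 X; have hy := sqrtr_ge0 Y.
rewrite -[leRHS]ger0_norm ?mulr_ge0 ?addr_ge0 // -sqrtr_sqr ler_wsqrtr //.
by apply: (le_trans sum_le); nra.
Qed.

Theorem theorem1p1 (R : realType) (n : nat) (G : set 'rV[R]_n) (p : R)
  (hG : domain G) (hGT : G != setT) (hp : 1 <= p)
  (z1 z2 : 'rV[R]_n) (hz1 : G z1) (hz2 : G z2) :
  triangular_ratio G z1 z2 <= barrlund G p z1 z2 /\
  barrlund G p z1 z2 <= powR 2 (1 - p^-1) * triangular_ratio G z1 z2.
Proof.
set c := powR 2 (1 - p^-1); set d := enorm (z1 - z2).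
set a := fun z => enorm (z1 - z); set b := fun z => enorm (z - z2).
set fs := fun z => d / (a z + b z); set fb := fun z => d / lpnorm2 p (a z) (b z).
have d0 : 0 <= d by exact: enorm_ge0.
have c0 : 0 <= c by exact: powR_ge0.
have [a0 b0] : (forall z, 0 <= a z) /\ (forall z, 0 <= b z) by split=> z; apply: enorm_ge0.
have fs_le_fb z : fs z <= 1 * fb z.
  rewrite mul1r; apply: (@ler_div_den _ c) => //;
    by [exact: lpnorm2_ge0 | exact: lpnorm2_le_add | exact: add_le_lpnorm2].
have fb_le_fs z : fb z <= c * fs z.
  apply: ler_div_den_scale => //;
    by [exact: lpnorm2_ge0 | exact: lpnorm2_le_add | exact: add_le_lpnorm2].
have fs_le2 z : fs z <= 2.
  rewrite /fs; have [->|ab_neq0] := eqVneq (a z + b z) 0; first by rewrite invr0 mulr0.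
  rewrite ler_pdivrMr; last by have := a0 z; have := b0 z; lra.
  rewrite /d /a /b; have -> : z1 - z2 = (z1 - z) + (z - z2) by rewrite addrA subrK.
  exact: enormD_le_double.
have ub_fs : has_ubound (fs @` boundary G) by exists 2 => _ [z _ <-].
have ub_fb : has_ubound (fb @` boundary G).
  by exists (c * 2) => _ [z _ <-]; exact: le_trans (fb_le_fs z) (ler_wpM2l c0 (fs_le2 z)).
rewrite /triangular_ratio /barrlund.
change (sup (fs @` boundary G) <= sup (fb @` boundary G) /\
        sup (fb @` boundary G) <= c * sup (fs @` boundary G)).
split; first rewrite -[leRHS]mul1r.
- exact: (sup_image_le_scale ler01 ub_fb (fun z _ => fs_le_fb z)).
- exact: (sup_image_le_scale c0 ub_fs (fun z _ => fb_le_fs z)).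
Qed.
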